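(* Let $u(t,x)$ be a smooth function of $t$ and of $x\in S^1=\mathbb{R}/\mathbb{Z}\simeq[0,1)$, and consider the linear system $$\psi_{xxx}=-\lambda\, m\,\psi,\qquad \psi_t=-\tfrac{1}{\lambda}\psi_{xx}-u\psi_x+u_x\psi,$$ where $\lambda\in\mathbb{C}\setminus\{0\}$ is a spectral parameter and $\psi(t,x)$ is a scalar eigenfunction. (i) If $m=\mu(u)-u_{xx}$, then the compatibility condition $(\psi_t)_{xxx}=(\psi_{xxx})_t$ of this system is equivalent to $u$ satisfying the $\mu$DP equation $$\mu(u_t)-u_{txx}+3\mu(u)u_x-3u_xu_{xx}-uu_{xxx}=0.$$ (ii) If $m=-u_{xx}$, then the compatibility condition $(\psi_t)_{xxx}=(\psi_{xxx})_t$ is equivalent to $u$ satisfying the $\mu$B equation $$-u_{txx}-3u_xu_{xx}-uu_{xxx}=0.$$ Thus both the $\mu$DP and the $\mu$B equations admit this Lax pair formulation.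
   Context: Here $\mu(u)=\int_0^1 u\,dx$ denotes the mean of a periodic function. Both equations are instances of $Au_t+3u_xAu+uAu_x=0$, i.e. $m_t=-um_x-3u_xm$ with $m=Au$, where $A=\mu-\partial_x^2$ for $\mu$DP and $A=-\partial_x^2$ for $\mu$B. *)

From Stdlib Require Import Reals List.
From Coquelicot Require Import Coquelicot.
Open Scope R_scope.

Definition dt (u : R -> R -> R) : R -> R -> R :=
  fun t x => Derive (fun s => u s x) t.
Definition dx (u : R -> R -> R) : R -> R -> R :=
  fun t x => Derive (fun y => u t y) x.

(* Iterated partial derivative along a word: true = d/dt, false = d/dx;
   the head of the list is applied last. *)
Fixpoint pd (w : list bool) (u : R -> R -> R) : R -> R -> R :=
  match w with
  | nil => u
  | b :: w' => if b then dt (pd w' u) else dx (pd w' u)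
  end.

Definition smooth2 (u : R -> R -> R) : Prop :=
  forall (w : list bool) (t x : R),
    ex_derive (fun s => pd w u s x) t /\
    ex_derive (fun y => pd w u t y) x /\
    continuity_2d_pt (pd w u) t x.

(* u is 1-periodic in x, i.e. a function on R x S^1 with S^1 = R/Z. *)
Definition periodic_x (u : R -> R -> R) : Prop :=
  forall t x, u t (x + 1) = u t x.

Definition mu (u : R -> R -> R) : R -> R :=
  fun t => RInt (fun x => u t x) 0 1.

Definition smooth1 (f : R -> R) : Prop :=
  forall (n : nat) (x : R), ex_derive (Derive_n f n) x.

Definition smoothC (f : R -> C) : Prop :=
  smooth1 (fun y => Re (f y)) /\ smooth1 (fun y => Im (f y)).

Definition dxC (psi : R -> R -> C) : R -> R -> C :=
  fun t x => (Derive (fun y => Re (psi t y)) x, Derive (fun y => Im (psi t y)) x).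

Definition Tflow (lam : C) (u : R -> R -> R) (psi : R -> R -> C) : R -> R -> C :=
  fun t x =>
    (- (/ lam) * dxC (dxC psi) t x
     - RtoC (u t x) * dxC psi t x
     + RtoC (dx u t x) * psi t x)%C.

(* Compatibility condition (psi_t)_xxx = (psi_xxx)_t of the Lax pair
     psi_xxx = - lambda m psi,   psi_t = T psi,
   for a given m: for every lambda <> 0 and every eigenfunction psi of the
   x-equation, computing (psi_t)_xxx with psi_t := T psi, and
   (psi_xxx)_t = (-lambda m psi)_t = -lambda m_t psi - lambda m psi_t
   with psi_t := T psi, gives the same result. *)
Definition lax_compatible (u m : R -> R -> R) : Prop :=
  forall lam : C, lam <> RtoC 0 ->
  forall psi : R -> R -> C,
    (forall t, smoothC (psi t)) ->
    (forall t x, dxC (dxC (dxC psi)) t x = (- lam * RtoC (m t x) * psi t x)%C) ->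
    forall t x,
      dxC (dxC (dxC (Tflow lam u psi))) t x =
      (- lam * RtoC (dt m t x) * psi t x
       - lam * RtoC (m t x) * Tflow lam u psi t x)%C.

Definition m_DP (u : R -> R -> R) : R -> R -> R :=
  fun t x => mu u t - dx (dx u) t x.
Definition m_B (u : R -> R -> R) : R -> R -> R :=
  fun t x => - dx (dx u) t x.

Definition muDP_eq (u : R -> R -> R) : Prop :=
  forall t x,
    mu (dt u) t - dx (dx (dt u)) t x + 3 * mu u t * dx u t x
    - 3 * dx u t x * dx (dx u) t x - u t x * dx (dx (dx u)) t x = 0.

Definition muB_eq (u : R -> R -> R) : Prop :=
  forall t x,
    - dx (dx (dt u)) t x - 3 * dx u t x * dx (dx u) t x
    - u t x * dx (dx (dx u)) t x = 0.

(* Write m = K(t) - u_xx (K = mu(u) or 0) and T psi = -(1/lambda) psi_xx - u psi_x + u_x psi.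
   Differentiating psi_xxx = -lambda m psi twice more and using m_x = -u_xxx gives, for every
   eigenfunction,
     (T psi)_xxx = -lambda m (T psi) + lambda (3 u_x m + u m_x) psi,
   so the compatibility condition says exactly (m_t + u m_x + 3 u_x m) psi = 0.  Eigenfunctions
   with psi(x0) = 1 exist at any point (Picard iteration for the linear ODE y''' = -m y), hence
   compatibility is equivalent to m_t + u m_x + 3 u_x m = 0.  With mu(u)_t = mu(u_t) and
   u_xxt = u_txx this is the muDP, respectively muB, equation. *)

From Stdlib Require Import Reals Lra Lia Factorial FunctionalExtensionality List.
From Coquelicot Require Import Coquelicot.
Open Scope R_scope.

Fixpoint derivable_n (k : nat) (f : R -> R) : Prop :=
  match k with
  | O => True
  | S k => (forall x, ex_derive f x) /\ derivable_n k (Derive f)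
  end.

Lemma derivable_n_ext k : forall f g,
  (forall x, f x = g x) -> derivable_n k f -> derivable_n k g.
Proof.
  induction k as [|k IH]; simpl; auto.
  intros f g Hfg [Hf HDf]; split.
  - intros x; apply (ex_derive_ext f); auto.
  - apply (IH (Derive f)); auto. intros x; apply Derive_ext; auto.
Qed.

Lemma derivable_n_pred k : forall f, derivable_n (S k) f -> derivable_n k f.
Proof.
  induction k as [|k IH]; simpl; auto.
  intros f [Hf HDf]; split; auto.
Qed.

Lemma derivable_n_const k : forall c, derivable_n k (fun _ => c).
Proof.
  induction k as [|k IH]; simpl; auto.
  intros c; split.
  - intros; apply ex_derive_const.
  - apply (derivable_n_ext k (fun _ => 0)); auto. intros; rewrite Derive_const; auto.
Qed.

Lemma derivable_n_plus k : forall f g,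
  derivable_n k f -> derivable_n k g -> derivable_n k (fun y => f y + g y).
Proof.
  induction k as [|k IH]; simpl; auto.
  intros f g [Hf HDf] [Hg HDg]; split.
  - intros x; apply (ex_derive_plus f g); auto.
  - apply (derivable_n_ext k (fun y => Derive f y + Derive g y)); auto.
    intros; rewrite Derive_plus; auto.
Qed.

Lemma derivable_n_opp k : forall f, derivable_n k f -> derivable_n k (fun y => - f y).
Proof.
  induction k as [|k IH]; simpl; auto.
  intros f [Hf HDf]; split.
  - intros x; apply (ex_derive_opp f); auto.
  - apply (derivable_n_ext k (fun y => - Derive f y)); auto.
    intros; rewrite Derive_opp; auto.
Qed.

Lemma derivable_n_mult k : forall f g,
  derivable_n k f -> derivable_n k g -> derivable_n k (fun y => f y * g y).
Proof.
  induction k as [|k IH]; simpl; auto.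
  intros f g Hf Hg.
  pose proof (derivable_n_pred k f Hf) as Hf'; pose proof (derivable_n_pred k g Hg) as Hg'.
  destruct Hf as [Df HDf], Hg as [Dg HDg]; split.
  - intros x; apply ex_derive_mult; auto.
  - apply (derivable_n_ext k (fun y => Derive f y * g y + f y * Derive g y)).
    + intros; rewrite Derive_mult; auto.
    + apply derivable_n_plus; apply IH; auto.
Qed.

Lemma Derive_n_Sr f n x : Derive_n f (S n) x = Derive_n (Derive f) n x.
Proof.
  revert x; induction n as [|n IH]; intros x; simpl; auto.
  apply Derive_ext; intros; apply IH.
Qed.

Lemma smooth1_derivable_n f : smooth1 f <-> forall k, derivable_n k f.
Proof.
  split.
  - intros Hf k; revert f Hf; induction k as [|k IH]; simpl; auto.
    intros f Hf; split.
    + intros x; apply (Hf 0%nat).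
    + apply IH; intros n x.
      apply (ex_derive_ext (Derive_n f (S n))); [intros; apply Derive_n_Sr | apply Hf].
  - intros Hf n; revert f Hf; induction n as [|n IH]; intros f Hf x.
    + apply (Hf 1%nat).
    + apply (ex_derive_ext (Derive_n (Derive f) n)); [intros; symmetry; apply Derive_n_Sr|].
      apply IH; intros k; apply (Hf (S k)).
Qed.

Lemma smooth1_const c : smooth1 (fun _ => c).
Proof. apply smooth1_derivable_n; intros; apply derivable_n_const. Qed.

Lemma smooth1_plus f g : smooth1 f -> smooth1 g -> smooth1 (fun y => f y + g y).
Proof. rewrite !smooth1_derivable_n; intros; apply derivable_n_plus; auto. Qed.

Lemma smooth1_opp f : smooth1 f -> smooth1 (fun y => - f y).
Proof. rewrite !smooth1_derivable_n; intros; apply derivable_n_opp; auto. Qed.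

Lemma smooth1_minus f g : smooth1 f -> smooth1 g -> smooth1 (fun y => f y - g y).
Proof. intros; apply smooth1_plus, smooth1_opp; auto. Qed.

Lemma smooth1_mult f g : smooth1 f -> smooth1 g -> smooth1 (fun y => f y * g y).
Proof. rewrite !smooth1_derivable_n; intros; apply derivable_n_mult; auto. Qed.

Lemma smooth1_Derive f : smooth1 f -> smooth1 (Derive f).
Proof. rewrite !smooth1_derivable_n; intros Hf k; apply (Hf (S k)). Qed.

Lemma smooth1_ex_derive f x : smooth1 f -> ex_derive f x.
Proof. intros Hf; apply (Hf 0%nat). Qed.

(* On a time slice, [dxC psi t] and [Tflow lam u psi t] are convertible to [dC (psi t)]
   and [Tflow1 lam (u t) (psi t)]. *)
Definition dC (f : R -> C) : R -> C :=
  fun y => (Derive (fun z => Re (f z)) y, Derive (fun z => Im (f z)) y).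

Lemma smoothC_const c : smoothC (fun _ => c).
Proof. split; apply smooth1_const. Qed.

Lemma smoothC_RtoC g : smooth1 g -> smoothC (fun y => RtoC (g y)).
Proof. intros Hg; split; [exact Hg | exact (smooth1_const 0)]. Qed.

Lemma smoothC_plus f g : smoothC f -> smoothC g -> smoothC (fun y => (f y + g y)%C).
Proof. intros [Rf If] [Rg Ig]; split; apply smooth1_plus; auto. Qed.

Lemma smoothC_minus f g : smoothC f -> smoothC g -> smoothC (fun y => (f y - g y)%C).
Proof. intros [Rf If] [Rg Ig]; split; apply smooth1_minus; auto. Qed.

Lemma smoothC_mult f g : smoothC f -> smoothC g -> smoothC (fun y => (f y * g y)%C).
Proof.
  intros [Rf If] [Rg Ig]; split; cbn; auto using smooth1_plus, smooth1_minus, smooth1_mult.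
Qed.

Lemma smoothC_dC f : smoothC f -> smoothC (dC f).
Proof. intros [Rf If]; split; apply smooth1_Derive; auto. Qed.

Lemma dC_RtoC g : dC (fun y => RtoC (g y)) = fun y => RtoC (Derive g y).
Proof.
  apply functional_extensionality; intros y; unfold dC, RtoC; cbn.
  rewrite Derive_const; auto.
Qed.

Lemma dC_const c : dC (fun _ => c) = fun _ => RtoC 0.
Proof. apply functional_extensionality; intros y; unfold dC; rewrite !Derive_const; auto. Qed.

Lemma dC_plus f g : smoothC f -> smoothC g ->
  dC (fun y => (f y + g y)%C) = fun y => (dC f y + dC g y)%C.
Proof.
  intros [Rf If] [Rg Ig]; apply functional_extensionality; intros y; unfold dC; cbn.
  rewrite !Derive_plus; auto using smooth1_ex_derive.
Qed.

Lemma dC_minus f g : smoothC f -> smoothC g ->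
  dC (fun y => (f y - g y)%C) = fun y => (dC f y - dC g y)%C.
Proof.
  intros [Rf If] [Rg Ig]; apply functional_extensionality; intros y; unfold dC; cbn.
  rewrite Derive_plus, Derive_opp, Derive_plus, Derive_opp;
    auto using smooth1_ex_derive, smooth1_opp.
Qed.

Lemma dC_mult f g : smoothC f -> smoothC g ->
  dC (fun y => (f y * g y)%C) = fun y => (dC f y * g y + f y * dC g y)%C.
Proof.
  intros [Rf If] [Rg Ig]; apply functional_extensionality; intros y; unfold dC; cbn.
  rewrite Derive_minus, Derive_plus, !Derive_mult;
    auto using smooth1_ex_derive, smooth1_mult.
  unfold Re, Im; apply injective_projections; cbn; ring.
Qed.

Ltac solve_smooth1 := repeat match goal with
  | |- smooth1 (fun y => @?f y + @?g y) => apply smooth1_plus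
  | |- smooth1 (fun y => @?f y - @?g y) => apply smooth1_minus
  | |- smooth1 (fun y => @?f y * @?g y) => apply smooth1_mult
  | |- smooth1 (fun y => - @?f y) => apply smooth1_opp
  | |- smooth1 (fun y => Derive _ y) => apply smooth1_Derive
  | |- smooth1 (Derive _) => apply smooth1_Derive
  | |- smooth1 _ => first [assumption | apply smooth1_const]
  end.

Ltac solve_smoothC := repeat match goal with
  | |- smoothC (fun y => (@?f y + @?g y)%C) => apply smoothC_plus
  | |- smoothC (fun y => (@?f y - @?g y)%C) => apply smoothC_minus
  | |- smoothC (fun y => (@?f y * @?g y)%C) => apply smoothC_mult
  | |- smoothC (fun y => RtoC (@?g y)) => apply smoothC_RtoC; solve_smooth1
  | |- smoothC (fun y => dC _ y) => apply smoothC_dC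
  | |- smoothC (dC _) => apply smoothC_dC
  | |- smoothC _ => first [assumption | apply smoothC_const]
  end.

Ltac expand_dC := repeat (first
  [ rewrite dC_plus by solve_smoothC | rewrite dC_minus by solve_smoothC
  | rewrite dC_mult by solve_smoothC | rewrite dC_const | rewrite dC_RtoC ]; cbv beta).

Definition Tflow1 (lam : C) (U : R -> R) (ps : R -> C) : R -> C :=
  fun y => (- (/ lam) * dC (dC ps) y - RtoC (U y) * dC ps y + RtoC (Derive U y) * ps y)%C.

Lemma dC3_Tflow1 (lam : C) (U m : R -> R) (K : R) (ps : R -> C) :
  lam <> RtoC 0 -> smooth1 U -> smoothC ps ->
  (forall y, m y = K - Derive (Derive U) y) ->
  (forall y, dC (dC (dC ps)) y = (- lam * RtoC (m y) * ps y)%C) ->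
  forall y, dC (dC (dC (Tflow1 lam U ps))) y =
    (- lam * RtoC (m y) * Tflow1 lam U ps y
     + lam * RtoC (3 * Derive U y * m y + U y * Derive m y) * ps y)%C.
Proof.
  intros Hlam HU Hps Hm Heig.
  assert (Hm_fun : m = fun y => K - Derive (Derive U) y) by (apply functional_extensionality; auto).
  assert (Hm_smooth : smooth1 m) by (rewrite Hm_fun; solve_smooth1).
  assert (Dm : Derive m = fun y => - Derive (Derive (Derive U)) y).
  { apply functional_extensionality; intros y; rewrite Hm_fun, Derive_minus, Derive_const.
    - ring.
    - apply ex_derive_const.
    - apply smooth1_ex_derive; solve_smooth1. }
  assert (D2m : Derive (Derive m) = fun y => - Derive (Derive (Derive (Derive U))) y).
  { rewrite Dm; apply functional_extensionality; intros y; apply Derive_opp. }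
  assert (ps3 : dC (dC (dC ps)) = fun y => (- lam * RtoC (m y) * ps y)%C)
    by (apply functional_extensionality; auto).
  assert (ps4 : dC (dC (dC (dC ps))) =
    fun y => (- lam * (RtoC (Derive m y) * ps y + RtoC (m y) * dC ps y))%C).
  { rewrite ps3; expand_dC; apply functional_extensionality; intros y; ring. }
  assert (ps5 : dC (dC (dC (dC (dC ps)))) =
    fun y => (- lam * (RtoC (Derive (Derive m) y) * ps y
       + 2 * RtoC (Derive m y) * dC ps y + RtoC (m y) * dC (dC ps) y))%C).
  { rewrite ps4; expand_dC; apply functional_extensionality; intros y; ring. }
  intros y; unfold Tflow1; expand_dC.
  rewrite ps5, ps4, ps3, D2m, Dm.
  rewrite ?RtoC_plus, ?RtoC_mult, ?RtoC_opp.
  field; auto.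
Qed.

Lemma is_RInt_pow_dist a b k : a <= b ->
  is_RInt (fun s => (s - a) ^ k) a b ((b - a) ^ S k / INR (S k)) /\
  is_RInt (fun s => (b - s) ^ k) a b ((b - a) ^ S k / INR (S k)).
Proof.
  intros Hab.
  assert (Hk : INR (S k) <> 0) by (apply not_0_INR; lia).
  split.
  - replace ((b - a) ^ S k / INR (S k))
      with (minus ((b - a) ^ S k / INR (S k)) ((a - a) ^ S k / INR (S k)))
      by (unfold minus, plus, opp; cbn; rewrite Rminus_diag; field; auto).
    apply (is_RInt_derive (V := R_CompleteNormedModule) (fun s => (s - a) ^ S k / INR (S k))).
    + intros s _; auto_derive; auto.
      change (match k with 0%nat => 1 | S _ => INR k + 1 end) with (INR (S k)).
      unfold Rminus; generalize ((s + - a) ^ k); intros; field; auto.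
    + intros s _; apply (ex_derive_continuous (K := R_AbsRing) (V := R_NormedModule)).
      auto_derive; auto.
  - replace ((b - a) ^ S k / INR (S k))
      with (minus (- (b - b) ^ S k / INR (S k)) (- (b - a) ^ S k / INR (S k)))
      by (unfold minus, plus, opp; cbn; rewrite Rminus_diag; field; auto).
    apply (is_RInt_derive (V := R_CompleteNormedModule) (fun s => - (b - s) ^ S k / INR (S k))).
    + intros s _; auto_derive; auto.
      change (match k with 0%nat => 1 | S _ => INR k + 1 end) with (INR (S k)).
      unfold Rminus; generalize ((b + - s) ^ k); intros; field; auto.
    + intros s _; apply (ex_derive_continuous (K := R_AbsRing) (V := R_NormedModule)).
      auto_derive; auto.
Qed.

Lemma RInt_pow_dist_bound (g : R -> R) x0 x C k : (forall s, continuous g s) ->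
  (forall s, Rmin x0 x <= s <= Rmax x0 x -> Rabs (g s) <= C * Rabs (s - x0) ^ k) ->
  Rabs (RInt g x0 x) <= C * Rabs (x - x0) ^ S k / INR (S k).
Proof.
  intros Hg Hbound.
  assert (Hint : forall a b, ex_RInt g a b)
    by (intros; apply (ex_RInt_continuous (V := R_CompleteNormedModule)); auto).
  destruct (Rle_or_lt x0 x) as [Hle | Hlt].
  - destruct (is_RInt_pow_dist x0 x k Hle) as [Hpow _].
    rewrite (Rabs_right (x - x0)) by lra.
    apply (norm_RInt_le (V := R_NormedModule) g (fun s => C * (s - x0) ^ k) x0 x _ _ Hle).
    + intros s Hs; replace (s - x0) with (Rabs (s - x0)) by (rewrite Rabs_right; lra).
      apply Hbound; rewrite Rmin_left, Rmax_right; lra.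
    + apply (RInt_correct (V := R_CompleteNormedModule)); auto.
    + unfold Rdiv; rewrite Rmult_assoc; apply (is_RInt_scal (V := R_NormedModule)), Hpow.
  - destruct (is_RInt_pow_dist x x0 k (Rlt_le _ _ Hlt)) as [_ Hpow].
    rewrite <- (opp_RInt_swap (V := R_CompleteNormedModule)) by auto.
    rewrite (Rabs_left (x - x0)), Ropp_minus_distr by lra.
    change (Rabs (- RInt g x x0) <= C * (x0 - x) ^ S k / INR (S k)); rewrite Rabs_Ropp.
    apply (norm_RInt_le (V := R_NormedModule) g (fun s => C * (x0 - s) ^ k) x x0 _ _
             (Rlt_le _ _ Hlt)).
    + intros s Hs; replace (x0 - s) with (Rabs (s - x0)) by (rewrite Rabs_left1; lra).
      apply Hbound; rewrite Rmin_right, Rmax_left; lra.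
    + apply (RInt_correct (V := R_CompleteNormedModule)); auto.
    + unfold Rdiv; rewrite Rmult_assoc; apply (is_RInt_scal (V := R_NormedModule)), Hpow.
Qed.

Lemma CVU_dom_sum_n_bound (h : nat -> R -> R) (c : nat -> R) (D : R -> Prop) :
  ex_series c -> (forall k y, D y -> Rabs (h k y) <= c k) ->
  CVU_dom (fun n y => sum_n (fun k => h k y) n) D.
Proof.
  intros Hc Hh; apply CVU_dom_cauchy; intros eps.
  destruct (Cauchy_ex_series c Hc eps) as [N HN].
  exists N; intros n m y Dy Hn Hm.
  assert (Htail : forall n m, (N <= m)%nat -> (m < n)%nat ->
    Rabs (sum_n (fun k => h k y) n - sum_n (fun k => h k y) m) < eps).
  { clear n m Hn Hm; intros n m Hm Hmn.
    change (Rabs (minus (sum_n (fun k => h k y) n) (sum_n (fun k => h k y) m)) < eps).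
    rewrite <- (sum_n_m_sum_n (G := R_AbelianGroup)) by lia.
    eapply Rle_lt_trans; [apply (norm_sum_n_m (K := R_AbsRing) (V := R_NormedModule)) |].
    eapply Rle_lt_trans; [apply sum_n_m_le; intros k; apply (Hh k y Dy) |].
    eapply Rle_lt_trans; [apply Rle_abs | apply (HN (S m) n); lia]. }
  destruct (Nat.lt_trichotomy m n) as [H | [-> | H]].
  - apply Htail; auto.
  - rewrite Rminus_diag, Rabs_R0; apply cond_pos.
  - rewrite Rabs_minus_sym; apply Htail; auto.
Qed.

Lemma continuous_sum_n (g : nat -> R -> R) n y :
  (forall k, continuous (g k) y) -> continuous (fun y => sum_n (fun k => g k y) n) y.
Proof.
  intros Hg; induction n as [|n IH].
  - apply (continuous_ext (g 0%nat)); [intros; rewrite sum_O |]; auto.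
  - apply (continuous_ext (fun y => plus (sum_n (fun k => g k y) n) (g (S n) y))).
    { intros; rewrite sum_Sn; auto. }
    apply (continuous_plus (K := R_AbsRing) (V := R_NormedModule)); auto.
Qed.

Lemma is_derive_Series (f g : nat -> R -> R) (D : R -> Prop) (cf cg : nat -> R) :
  open D -> is_connected D ->
  (forall k y, is_derive (f k) y (g k y)) -> (forall k y, continuous (g k) y) ->
  ex_series cf -> ex_series cg ->
  (forall k y, D y -> Rabs (f k y) <= cf k) -> (forall k y, D y -> Rabs (g k y) <= cg k) ->
  forall x, D x -> is_derive (fun y => Series (fun k => f k y)) x (Series (fun k => g k x)).
Proof.
  intros HD_open HD_conn Hfg Hg Hcf Hcg Hf_bound Hg_bound x Dx.
  assert (Hsum : forall n y,
    is_derive (fun y => sum_n (fun k => f k y) n) y (sum_n (fun k => g k y) n)).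
  { intros n y; apply (is_derive_sum_n (K := R_AbsRing) (V := R_NormedModule)); auto. }
  assert (Dsum : forall n y,
    Derive (fun y => sum_n (fun k => f k y) n) y = sum_n (fun k => g k y) n)
    by (intros; apply is_derive_unique, Hsum).
  assert (Dsum_fun : (fun n y => Derive (fun y => sum_n (fun k => f k y) n) y)
                     = fun n y => sum_n (fun k => g k y) n)
    by (do 2 (apply functional_extensionality; intros); apply Dsum).
  replace (Series (fun k => g k x))
    with (real (Lim_seq (fun n => Derive (fun y => sum_n (fun k => f k y) n) x)))
    by (unfold Series; rewrite (Lim_seq_ext _ _ (fun n => Dsum n x)); reflexivity).
  apply (CVU_Derive (fun n y => sum_n (fun k => f k y) n) D HD_open HD_conn); auto.
  - apply (CVU_dom_sum_n_bound f cf D); auto.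
  - intros n y _; eexists; apply Hsum.
  - intros n y _; apply continuity_pt_filterlim.
    apply (continuous_ext (fun y => sum_n (fun k => g k y) n)); [intros; symmetry; apply Dsum |].
    apply continuous_sum_n; auto.
  - rewrite Dsum_fun; apply (CVU_dom_sum_n_bound g cg D); auto.
Qed.

Lemma is_derive_RInt_continuous (g : R -> R) x0 x :
  (forall s, continuous g s) -> is_derive (fun x => RInt g x0 x) x (g x).
Proof.
  intros Hg; apply (is_derive_RInt (V := R_CompleteNormedModule) g _ x0 x); auto.
  apply filter_forall; intros b; apply (RInt_correct (V := R_CompleteNormedModule)).
  apply (ex_RInt_continuous (V := R_CompleteNormedModule)); auto.
Qed.

Lemma Rabs_sub_between x0 x s :
  Rmin x0 x <= s <= Rmax x0 x -> Rabs (s - x0) <= Rabs (x - x0).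
Proof.
  unfold Rmin, Rmax; destruct (Rle_dec x0 x); intros; unfold Rabs; repeat destruct Rcase_abs; lra.
Qed.

Lemma ex_series_pow_fact z : ex_series (fun k => z ^ k / INR (fact k)).
Proof.
  exists (exp z); eapply is_series_ext; [| apply (is_exp_Reals z)].
  intros n; simpl; rewrite pow_n_pow; reflexivity.
Qed.

Lemma pow_fact_le A B k : 0 <= A <= B -> A ^ k / INR (fact k) <= B ^ k / INR (fact k).
Proof.
  intros HAB; apply Rmult_le_compat_r; [left; apply Rinv_0_lt_compat, INR_fact_lt_0 |].
  apply pow_incr; auto.
Qed.

Lemma continuous_bounded_near (a : R -> R) x0 r : (forall s, continuous a s) ->
  exists M, 1 <= M /\ forall s, Rabs (s - x0) <= r -> Rabs (a s) <= M.
Proof.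
  intros Ha.
  destruct (Rle_or_lt 0 r) as [Hr | Hr].
  2: { exists 1; split; [lra |]; intros s Hs; pose proof (Rabs_pos (s - x0)); lra. }
  destruct (continuity_ab_maj (fun s => Rabs (a s)) (x0 - r) (x0 + r)) as [s_max [Hmax _]];
    [lra | |].
  { intros c _; apply (continuity_pt_comp a Rabs); [| apply Rcontinuity_abs].
    apply continuity_pt_filterlim, Ha. }
  exists (Rmax 1 (Rabs (a s_max))); split; [apply Rmax_l |].
  intros s Hs; eapply Rle_trans; [| apply Rmax_r]; apply Hmax.
  revert Hs; unfold Rabs; destruct Rcase_abs; intros; lra.
Qed.

(* y''' = a y as a first-order system for (f 0, f 1, f 2) = (y, y', y''); indices above 2
   behave like 2. *)
Definition ode3_field (a : R -> R) (f : nat -> R -> R) (i : nat) (s : R) : R :=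
  match i with O => f 1%nat s | 1%nat => f 2%nat s | _ => a s * f 0%nat s end.

(* Terms of the Picard (Neumann) series for (y, y', y'') with initial data (1, 0, 0) at x0:
   the k-th term is the k-fold iterated integral of the field applied to the initial data. *)
Fixpoint picard (a : R -> R) (x0 : R) (k : nat) : nat -> R -> R :=
  match k with
  | O => fun i _ => match i with O => 1 | _ => 0 end
  | S k => fun i x => RInt (ode3_field a (picard a x0 k) i) x0 x
  end.

Section Picard.
Variables (a : R -> R) (x0 : R).
Hypothesis a_cont : forall s, continuous a s.

Lemma ode3_field_continuous f i x :
  (forall i x, continuous (f i) x) -> continuous (ode3_field a f i) x.
Proof.
  intros Hf; destruct i as [|[|i]]; unfold ode3_field; [apply Hf | apply Hf |].
  apply (continuous_mult (K := R_AbsRing)); auto.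
Qed.

Lemma picard_continuous k i x : continuous (picard a x0 k i) x.
Proof.
  revert i x; induction k as [|k IH]; intros i x.
  - destruct i; apply continuous_const.
  - apply (ex_derive_continuous (K := R_AbsRing) (V := R_NormedModule)); eexists.
    apply is_derive_RInt_continuous; intros; apply ode3_field_continuous; auto.
Qed.

Lemma is_derive_picard k i x :
  is_derive (picard a x0 (S k) i) x (ode3_field a (picard a x0 k) i x).
Proof. apply is_derive_RInt_continuous; intros; apply ode3_field_continuous, picard_continuous. Qed.

Section Bounds.
Variables r M : R.
Hypothesis M_ge1 : 1 <= M.
Hypothesis a_bound : forall s, Rabs (s - x0) <= r -> Rabs (a s) <= M.

Lemma ode3_field_bound f B i s : Rabs (s - x0) <= r ->
  (forall j, Rabs (f j s) <= B) -> Rabs (ode3_field a f i s) <= M * B.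
Proof.
  intros Hs Hf; assert (0 <= B) by (eapply Rle_trans; [apply Rabs_pos | apply (Hf 0%nat)]).
  destruct i as [|[|i]]; simpl.
  - specialize (Hf 1%nat); nra.
  - specialize (Hf 2%nat); nra.
  - rewrite Rabs_mult; apply Rmult_le_compat; auto using Rabs_pos.
Qed.

Lemma picard_bound k i x : Rabs (x - x0) <= r ->
  Rabs (picard a x0 k i x) <= (M * Rabs (x - x0)) ^ k / INR (fact k).
Proof.
  revert i x; induction k as [|k IH]; intros i x Hx.
  - destruct i; simpl; rewrite ?Rabs_R1, ?Rabs_R0; lra.
  - pose proof (INR_fact_lt_0 k) as Hfact.
    simpl picard; eapply Rle_trans.
    + apply (RInt_pow_dist_bound _ x0 x (M ^ S k / INR (fact k)) k).
      * intros; apply ode3_field_continuous, picard_continuous.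
      * intros s Hs; pose proof (Rle_trans _ _ _ (Rabs_sub_between x0 x s Hs) Hx) as Hsr.
        eapply Rle_trans.
        { apply (ode3_field_bound _ ((M * Rabs (s - x0)) ^ k / INR (fact k)) i s Hsr).
          intros; apply IH; auto. }
        rewrite Rpow_mult_distr; right; simpl; field; lra.
    + right; rewrite fact_simpl, mult_INR, Rpow_mult_distr.
      assert (0 < INR (S k)) by (apply lt_0_INR; lia).
      field; lra.
Qed.

End Bounds.

Definition picard_series i y := Series (fun k => picard a x0 k i y).

Lemma is_derive_picard_series i x :
  is_derive (picard_series i) x (ode3_field a picard_series i x).
Proof.
  set (r := Rabs (x - x0) + 1).
  destruct (continuous_bounded_near a x0 r a_cont) as [M [M_ge1 a_bound]].
  set (cf := fun k => (M * r) ^ k / INR (fact k)).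
  set (g := fun k y => match k with O => 0 | S k => ode3_field a (picard a x0 k) i y end).
  assert (Hg : Series (fun k => g k x) = ode3_field a picard_series i x).
  { rewrite Series_incr_1_aux by reflexivity.
    destruct i as [|[|i]]; unfold g, ode3_field, picard_series; auto.
    apply Series_scal_l. }
  rewrite <- Hg; unfold picard_series.
  assert (Hbound : forall k j y, x0 - r < y < x0 + r -> Rabs (picard a x0 k j y) <= cf k).
  { intros k j y Hy; assert (Hyr : Rabs (y - x0) <= r) by (apply Rabs_le; lra).
    eapply Rle_trans; [apply (picard_bound r M M_ge1 a_bound k j y Hyr) |].
    apply pow_fact_le; split; [apply Rmult_le_pos; [lra | apply Rabs_pos] |].
    apply Rmult_le_compat_l; lra. }
  apply (is_derive_Series (fun k => picard a x0 k i) g (fun y => x0 - r < y < x0 + r) cf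
           (fun k => match k with O => 0 | S k => M * cf k end)).
  - apply open_and; [apply open_gt | apply open_lt].
  - intros y1 y2 z Hy1 Hy2 Hz; lra.
  - intros [|k] y; [destruct i; apply (is_derive_const (K := R_AbsRing) (V := R_NormedModule)) |].
    apply is_derive_picard.
  - intros [|k] y; [apply continuous_const |].
    apply ode3_field_continuous; intros; apply picard_continuous.
  - apply ex_series_pow_fact.
  - apply ex_series_incr_1, (ex_series_scal_l (K := R_AbsRing) (V := R_NormedModule)).
    apply ex_series_pow_fact.
  - intros k y Hy; apply Hbound; auto.
  - intros [|k] y Hy; [simpl; rewrite Rabs_R0; apply Rle_refl |].
    apply (ode3_field_bound r M M_ge1 a_bound); [apply Rabs_le; lra |].
    intros; apply Hbound; auto.
  - unfold r; pose proof (Rabs_pos (x - x0)); split; unfold Rabs in *; destruct Rcase_abs; lra.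
Qed.

End Picard.

Lemma Series_first_only c : Series (fun k => match k with O => c | S _ => 0 end) = c.
Proof.
  unfold Series; rewrite (Lim_seq_ext _ (fun _ => c)), Lim_seq_const; auto.
  induction n as [|n IH]; [rewrite sum_O | rewrite sum_Sn, IH]; auto.
  unfold plus; simpl; ring.
Qed.

Lemma ode3_exists (a : R -> R) x0 : smooth1 a ->
  exists y, smooth1 y /\ y x0 = 1 /\ forall x, Derive (Derive (Derive y)) x = a x * y x.
Proof.
  intros Ha.
  assert (a_cont : forall s, continuous a s).
  { intros s; apply (ex_derive_continuous (K := R_AbsRing) (V := R_NormedModule)).
    apply smooth1_ex_derive; auto. }
  set (Y := picard_series a x0).
  assert (DY : forall i, Derive (Y i) = ode3_field a Y i).
  { intros i; apply functional_extensionality; intros x.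
    apply is_derive_unique, is_derive_picard_series; auto. }
  exists (Y 0%nat); split; [| split].
  - apply smooth1_derivable_n; intros k.
    enough (HY : forall i, derivable_n k (Y i)) by auto.
    induction k as [|k IH]; simpl; auto; intros i; split.
    + intros x; eexists; apply is_derive_picard_series; auto.
    + rewrite DY; destruct i as [|[|i]]; unfold ode3_field; auto.
      apply derivable_n_mult; auto; apply smooth1_derivable_n; auto.
  - unfold Y, picard_series.
    rewrite (Series_ext _ (fun k => match k with O => 1 | S _ => 0 end)).
    + apply Series_first_only.
    + intros [|k]; [reflexivity | apply (RInt_point (V := R_CompleteNormedModule))].
  - intros x; rewrite (DY 0%nat); change (ode3_field a Y 0) with (Y 1%nat).
    rewrite (DY 1%nat); change (ode3_field a Y 1) with (Y 2%nat).
    rewrite (DY 2%nat); reflexivity.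
Qed.

Definition lax_residual (u m : R -> R -> R) (t x : R) : R :=
  dt m t x + u t x * dx m t x + 3 * dx u t x * m t x.

Section Smooth2.
Variable u : R -> R -> R.
Hypothesis hu : smooth2 u.

Lemma smooth2_smooth1_x w t : smooth1 (pd w u t).
Proof.
  apply smooth1_derivable_n; intros k; revert w.
  induction k as [|k IH]; simpl; auto.
  intros w; split.
  - intros x; apply (hu w t x).
  - apply (IH (false :: w)).
Qed.

Lemma pd_dt_dx_comm w t x : pd (true :: false :: w) u t x = pd (false :: true :: w) u t x.
Proof.
  change (Derive (fun s => Derive (fun y => pd w u s y) x) t
    = Derive (fun y => Derive (fun s => pd w u s y) t) x).
  apply Schwarz.
  - exists (mkposreal 1 Rlt_0_1); intros a b _ _.
    split; [apply (hu w a b) |].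
    split; [apply (hu w a b) |].
    split; [apply (hu (false :: w) a b) | apply (hu (true :: w) a b)].
  - apply (hu (true :: false :: w) t x).
  - apply (hu (false :: true :: w) t x).
Qed.

Lemma is_derive_mu t : is_derive (mu u) t (mu (dt u) t).
Proof.
  apply (is_derive_RInt_param u 0 1 t).
  - apply filter_forall; intros s y _; apply (hu nil s y).
  - intros y _; apply (hu (true :: nil) t y).
  - apply filter_forall; intros s.
    apply (ex_RInt_continuous (V := R_CompleteNormedModule)); intros z _.
    apply (ex_derive_continuous (K := R_AbsRing) (V := R_NormedModule)), (hu nil s z).
Qed.

Lemma dt_dxx t x : Derive (fun s => dx (dx u) s x) t = dx (dx (dt u)) t x.
Proof.
  change (pd (true :: false :: false :: nil) u t x = pd (false :: false :: true :: nil) u t x).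
  rewrite pd_dt_dx_comm; apply Derive_ext; intros; apply (pd_dt_dx_comm nil).
Qed.

Lemma dt_m_DP t x : dt (m_DP u) t x = mu (dt u) t - dx (dx (dt u)) t x.
Proof.
  unfold dt at 1, m_DP; rewrite Derive_minus.
  - rewrite (is_derive_unique _ _ _ (is_derive_mu t)), dt_dxx; auto.
  - eexists; apply is_derive_mu.
  - apply (hu (false :: false :: nil) t x).
Qed.

Lemma dt_m_B t x : dt (m_B u) t x = - dx (dx (dt u)) t x.
Proof. unfold dt at 1, m_B; rewrite Derive_opp, dt_dxx; auto. Qed.

Lemma Derive_const_minus_dxx K t x :
  Derive (fun y => K - dx (dx u) t y) x = - dx (dx (dx u)) t x.
Proof.
  rewrite Derive_minus, Derive_const, Rminus_0_l; [reflexivity | apply ex_derive_const |].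
  apply (hu (false :: false :: nil) t x).
Qed.

Lemma lax_residual_m_DP t x : lax_residual u (m_DP u) t x =
  mu (dt u) t - dx (dx (dt u)) t x + 3 * mu u t * dx u t x
  - 3 * dx u t x * dx (dx u) t x - u t x * dx (dx (dx u)) t x.
Proof.
  unfold lax_residual; rewrite dt_m_DP.
  change (dx (m_DP u) t x) with (Derive (fun y => mu u t - dx (dx u) t y) x).
  rewrite Derive_const_minus_dxx; unfold m_DP; ring.
Qed.

Lemma lax_residual_m_B t x : lax_residual u (m_B u) t x =
  - dx (dx (dt u)) t x - 3 * dx u t x * dx (dx u) t x - u t x * dx (dx (dx u)) t x.
Proof.
  unfold lax_residual; rewrite dt_m_B.
  change (dx (m_B u) t x) with (Derive (fun y => - dx (dx u) t y) x).
  rewrite Derive_opp; change (Derive (dx (dx u) t) x) with (dx (dx (dx u)) t x).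
  unfold m_B; ring.
Qed.

End Smooth2.

Lemma Cplus_eq_self_r (a b : C) : a = (a + b)%C -> b = RtoC 0.
Proof. intros H; transitivity ((a + b) - a)%C; [ring | rewrite <- H; ring]. Qed.

Section Compatibility.
Variables (u m : R -> R -> R) (K : R -> R).
Hypothesis hu : smooth2 u.
Hypothesis m_def : forall t y, m t y = K t - dx (dx u) t y.

Lemma dxxx_Tflow lam psi : lam <> RtoC 0 -> (forall t, smoothC (psi t)) ->
  (forall t x, dxC (dxC (dxC psi)) t x = (- lam * RtoC (m t x) * psi t x)%C) ->
  forall t x, dxC (dxC (dxC (Tflow lam u psi))) t x =
    (- lam * RtoC (dt m t x) * psi t x - lam * RtoC (m t x) * Tflow lam u psi t x
     + lam * RtoC (lax_residual u m t x) * psi t x)%C.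
Proof.
  intros Hlam Hpsi Heig t x.
  pose proof (dC3_Tflow1 lam (u t) (m t) (K t) (psi t) Hlam
                (smooth2_smooth1_x u hu nil t) (Hpsi t) (m_def t) (Heig t) x) as Hid.
  change (dC (dC (dC (Tflow1 lam (u t) (psi t)))) x = (- lam * RtoC (dt m t x) * psi t x
    - lam * RtoC (m t x) * Tflow1 lam (u t) (psi t) x
    + lam * RtoC (lax_residual u m t x) * psi t x)%C).
  rewrite Hid; unfold lax_residual.
  change (Derive (u t) x) with (dx u t x); change (Derive (m t) x) with (dx m t x).
  rewrite !RtoC_plus, !RtoC_mult; ring.
Qed.

(* The eigenfunctions in [lax_compatible] need not depend smoothly on [t], so one may take
   a solution of the x-equation on the slice [t0] and zero elsewhere. *)
Lemma slice_eigenfunction_exists t0 x0 : exists psi : R -> R -> C,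
  (forall t, smoothC (psi t)) /\
  (forall t x, dxC (dxC (dxC psi)) t x = (- RtoC 1 * RtoC (m t x) * psi t x)%C) /\
  psi t0 x0 = RtoC 1.
Proof.
  assert (Hm_smooth : smooth1 (fun s => - m t0 s)).
  { pose proof (smooth2_smooth1_x u hu (false :: false :: nil) t0).
    rewrite (functional_extensionality _ _ (m_def t0)); solve_smooth1. }
  destruct (ode3_exists _ x0 Hm_smooth) as [y [Hy [Hy0 Hy3]]].
  exists (fun t x => if Req_EM_T t t0 then RtoC (y x) else RtoC 0); split; [| split].
  - intros t; destruct (Req_EM_T t t0); [apply smoothC_RtoC; auto | apply smoothC_const].
  - intros t x; change (dC (dC (dC (fun x => if Req_EM_T t t0 then RtoC (y x) else RtoC 0))) x
      = (- RtoC 1 * RtoC (m t x) * (if Req_EM_T t t0 then RtoC (y x) else RtoC 0))%C).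
    destruct (Req_EM_T t t0) as [-> | _].
    + rewrite !dC_RtoC, Hy3, RtoC_mult, RtoC_opp; ring.
    + rewrite !dC_const; ring.
  - destruct (Req_EM_T t0 t0) as [_ | Hne]; [rewrite Hy0 | contradiction]; auto.
Qed.

Lemma lax_compatible_iff : lax_compatible u m <-> forall t x, lax_residual u m t x = 0.
Proof.
  split.
  - intros Hcompat t0 x0.
    destruct (slice_eigenfunction_exists t0 x0) as [psi [Hpsi [Heig Hpsi0]]].
    pose proof (dxxx_Tflow (RtoC 1) psi C1_nz Hpsi Heig t0 x0) as Hid.
    rewrite (Hcompat (RtoC 1) C1_nz psi Hpsi Heig t0 x0), Hpsi0 in Hid.
    apply RtoC_inj; rewrite <- (Cplus_eq_self_r _ _ Hid); ring.
  - intros Hres lam Hlam psi Hpsi Heig t x.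
    rewrite (dxxx_Tflow lam psi Hlam Hpsi Heig t x), Hres; ring.
Qed.

End Compatibility.

Theorem theorem3p1 (u : R -> R -> R) (hu : smooth2 u) (hper : periodic_x u) :
  (lax_compatible u (m_DP u) <-> muDP_eq u) /\
  (lax_compatible u (m_B u) <-> muB_eq u).
Proof.
  split.
  - rewrite (lax_compatible_iff u (m_DP u) (mu u) hu (fun t y => eq_refl)).
    unfold muDP_eq; split; intros H t x;
      [rewrite <- lax_residual_m_DP | rewrite lax_residual_m_DP]; auto.
  - assert (m_B_def : forall t y, m_B u t y = 0 - dx (dx u) t y) by (intros; unfold m_B; ring).
    rewrite (lax_compatible_iff u (m_B u) (fun _ => 0) hu m_B_def).
    unfold muB_eq; split; intros H t x;
      [rewrite <- lax_residual_m_B | rewrite lax_residual_m_B]; auto.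
Qed.
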